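(* Let $G$ be a graph of order $n$, vertex connectivity $\kappa$ and independence number $\alpha$. If $\kappa+\alpha=n$, then $$\operatorname{th}_{\operatorname{H}}(G)=\lceil 2\sqrt{n-\kappa}+\kappa-1\rceil=\lceil n-\alpha+2\sqrt{\alpha}-1\rceil.$$
   Context: All graphs are finite, simple and undirected. Hopping color change rule: a blue vertex $v$ may force a white vertex $w$ to become blue if $v$ has not previously performed a force and every neighbor of $v$ is blue. For an initial blue set $B$, a chronological list of forces of $B$ is a sequence of such forces applied one at a time until no further force is possible; its underlying unordered set is a set of forces of $B$. $B$ is a hopping forcing set if some chronological list of forces of $B$ turns all vertices blue. For a set of forces $\mathcal F$ of $B$, let $\mathcal F^{(0)}=B$ and for $t\geq1$ let $\mathcal F^{(t)}$ be the set of vertices $w\notin U_{t-1}:=\bigcup_{i=0}^{t-1}\mathcal F^{(i)}$ for which there is $(v\to w)\in\mathcal F$ with $v\in U_{t-1}$ and all neighbors of $v$ in $U_{t-1}$. $\operatorname{pt}_{\operatorname{H}}(G;\mathcal F)$ is the least $t$ with $\bigcup_{i=0}^t\mathcal F^{(i)}=V(G)$ ($\infty$ if none); $\operatorname{pt}_{\operatorname{H}}(G;B)$ is the minimum of $\operatorname{pt}_{\operatorname{H}}(G;\mathcal F)$ over sets of forces $\mathcal F$ of $B$ ($\infty$ if $B$ is not a hopping forcing set). $\operatorname{th}_{\operatorname{H}}(G)=\min_{B\subseteq V(G)}\big(|B|+\operatorname{pt}_{\operatorname{H}}(G;B)\big)$. *)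

(* Simple graphs on a finType T are given by an edge
   relation e : rel T, assumed symmetric and irreflexive in the theorem. *)
From HB Require Import structures.
From mathcomp Require Import all_boot all_order all_algebra.
From mathcomp Require Import reals.
From Stdlib Require Import ClassicalEpsilon.

Set Implicit Arguments.
Unset Strict Implicit.
Unset Printing Implicit Defensive.

Section Graph.
Variables (T : finType) (e : rel T).

Definition del_rel (S : {set T}) : rel T :=
  [rel x y | [&& e x y, x \notin S & y \notin S]].

Definition separating (S : {set T}) : bool :=
  (#|~: S| <= 1) ||
  [exists u, exists v, [&& u \notin S, v \notin S & ~~ connect (del_rel S) u v]].

(* kappa(G) = min |S| over separating S (S = V is always separating) *)
Definition vconn : nat := \big[minn/#|T|]_(S : {set T} | separating S) #|S|.

Definition independent (S : {set T}) : bool :=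
  [forall x in S, forall y in S, ~~ e x y].

Definition indep_num : nat := \max_(S : {set T} | independent S) #|S|.

Definition nbrs_in (v : T) (U : {set T}) : bool := [forall u, e v u ==> (u \in U)].

(* v may hop-force w given the blue set and the set of vertices that
   already performed a force *)
Definition can_force (blue used : {set T}) (v w : T) : bool :=
  [&& v \in blue, v \notin used, w \notin blue & nbrs_in v blue].

(* s is a chronological list of forces starting from the blue set [blue]
   with already-used forcers [used]: each force is valid when applied, and
   at the end no further force is possible *)
Fixpoint chron_ok (blue used : {set T}) (s : seq (T * T)) : bool :=
  match s with
  | [::] => [forall v, forall w, ~~ can_force blue used v w]
  | (v, w) :: s' => can_force blue used v w && chron_ok (w |: blue) (v |: used) s'
  end.

Definition chron_list (B : {set T}) (s : seq (T * T)) : bool := chron_ok B set0 s.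

Definition forces_set (B : {set T}) (F : {set T * T}) : Prop :=
  exists s, chron_list B s /\ F = [set x in s].

Definition hopping_forcing_set (B : {set T}) : Prop :=
  exists s, chron_list B s /\ foldr (fun f U => f.2 |: U) B s = setT.

Fixpoint rounds (F : {set T * T}) (B : {set T}) (t : nat) : {set T} :=
  match t with
  | 0 => B
  | t'.+1 =>
      let U := rounds F B t' in
      U :|: [set w | (w \notin U) &&
                     [exists v, [&& (v, w) \in F, v \in U & nbrs_in v U]]]
  end.

(* |B| + t with t such that U_t = V for some set of forces F of B;
   th_H(G) is the minimum of these values over all B, F, t
   (minimising over t gives pt_H(G;F), over F gives pt_H(G;B)). *)
Definition th_achieves (k : nat) : Prop :=
  exists B F t, forces_set B F /\ rounds F B t = setT /\ k = #|B| + t.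

Definition th_achievesb (k : nat) : bool :=
  if excluded_middle_informative (th_achieves k) then true else false.

Lemma th_achieves_exists : exists k, th_achievesb k.
Proof.
exists #|T|; rewrite /th_achievesb.
case: excluded_middle_informative => // H; exfalso; apply: H.
exists setT, set0, 0; split; last by rewrite cardsT addn0.
exists [::]; split; last by apply/setP => x; rewrite !inE.
by apply/forallP => v; apply/forallP => w; rewrite /can_force !inE.
Qed.

Definition th_H : nat := ex_minn th_achieves_exists.

End Graph.

Definition simple_graph (T : finType) (e : rel T) : Prop :=
  symmetric e /\ irreflexive e.

From HB Require Import structures.
From mathcomp Require Import all_boot all_order all_algebra.
From mathcomp Require Import reals.
From mathcomp Require Import zify lra.
From Stdlib Require Import ClassicalEpsilon.
Import Order.TTheory GRing.Theory Num.Theory.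
Set Implicit Arguments. Unset Strict Implicit. Unset Printing Implicit Defensive.

(* Write n, kappa, alpha for the order, vertex connectivity and independence
   number of G, and N = ceil (2 sqrt alpha), the least N with 4 alpha <= N^2.
   We show th_H(G) = kappa + N - 1, from which both closed forms follow.

   Call a blue vertex ready when all its neighbours are blue.
   While some vertex is white, the blue non-ready vertices separate the ready
   ones from the white ones, so at least kappa blue vertices are not ready.
   Since every vertex forces at most once, a round colours at most as many
   vertices as there are ready ones; hence each round before completion adds
   at most |B| - kappa vertices, and completion at round i <= t forces
   n + i kappa <= (i + 1) |B|.  With n = kappa + alpha and AM-GM this gives
   4 alpha <= (|B| - kappa + i + 1)^2, i.e. |B| + t >= kappa + N - 1.

   For a maximum independent set I = {x_0, ..., x_(alpha-1)},
   colour V \ I and x_0, ..., x_(k-1) and let x_i force x_(i+k): vertices of I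
   are always ready, so t rounds suffice when alpha <= k (t + 1); taking
   k = floor (N / 2) and t = N - k - 1 gives |B| + t = kappa + N - 1. *)

Lemma bigmin_le (I : finType) (P : pred I) (F : I -> nat) (m : nat) (x : I) :
  P x -> \big[minn/m]_(i | P i) F i <= F x.
Proof.
move=> Px; have : x \in index_enum I by rewrite mem_index_enum.
elim: (index_enum I) => [//|a r IH]; rewrite inE big_cons.
case/predU1P => [<-|xr]; first by rewrite Px geq_minl.
by case: (P a); rewrite ?geq_min IH ?orbT.
Qed.

Lemma connect_closed (T : finType) (r : rel T) (A : {set T}) (x y : T) :
  (forall a b, r a b -> a \in A -> b \in A) -> connect r x y -> x \in A -> y \in A.
Proof.
move=> closedA /connectP [p rp ->]; elim: p x rp => //= z p IH x /andP[rxz rp] xA.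
exact: IH rp (closedA _ _ rxz xA).
Qed.

Lemma uniq_fst_functional (A B : eqType) (s : seq (A * B)) (v : A) (w w' : B) :
  uniq (map fst s) -> (v, w) \in s -> (v, w') \in s -> w = w'.
Proof.
elim: s => [//|[a b] s IH] /= /andP[a_s us].
have fresh x : (a, x) \notin s by apply: contra a_s => /(map_f fst).
rewrite !inE => /predU1P [[Ev ->]|vws] /predU1P [[Ev' ->]|vws'] //.
- by rewrite Ev (negbTE (fresh _)) in vws'.
- by rewrite Ev' (negbTE (fresh _)) in vws.
- exact: IH.
Qed.

Section HoppingForcing.
Variables (T : finType) (e : rel T).

Lemma vconn_le (S : {set T}) : separating e S -> vconn e <= #|S|.
Proof. exact: (bigmin_le (fun S0 : {set T} => #|S0|)). Qed.

(* Deleting all but one vertex separates, so kappa < n on a nonempty graph. *)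
Lemma vconn_lt_card : 0 < #|T| -> vconn e < #|T|.
Proof.
case/card_gt0P => x _; have := cardsC [set x]; rewrite cards1 => cardC.
have sep : separating e (~: [set x]) by apply/orP; left; rewrite setCK cards1.
by have := vconn_le sep; lia.
Qed.

Lemma indep_num_attained : exists2 I, independent e I & #|I| = indep_num e.
Proof.
have indep0 : independent e set0 by apply/forallP => y; rewrite inE.
rewrite /indep_num (bigop.bigmax_eq_arg set0) //.
by case: arg_maxnP => // I indI _; exists I.
Qed.

Lemma nbrs_in_mono (v : T) (U V : {set T}) :
  U \subset V -> nbrs_in e v U -> nbrs_in e v V.
Proof.
move=> /subsetP UV /forallP nbU; apply/forallP => u; apply/implyP => evu.
exact/UV/(implyP (nbU u)).
Qed.

Lemma indep_nbrs_in (I U : {set T}) (v : T) :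
  independent e I -> v \in I -> ~: I \subset U -> nbrs_in e v U.
Proof.
move=> /forallP indI vI /subsetP IU; apply/forallP => u; apply/implyP => evu.
apply: IU; rewrite inE; apply: contraL evu => uI.
by move/forallP: (implyP (indI v) vI) => /(_ u); rewrite uI.
Qed.

Lemma chron_ok_all_blue (used : {set T}) : chron_ok e setT used [::].
Proof. by apply/forallP => v; apply/forallP => w; rewrite /can_force !inE /= !andbF. Qed.

Definition ready (U : {set T}) : {set T} := [set v in U | nbrs_in e v U].

Definition targets (F : {set T * T}) (X : {set T}) : {set T} :=
  snd @: [set f in F | f.1 \in X].

Definition round_step (F : {set T * T}) (U : {set T}) : {set T} :=
  U :|: [set w | (w \notin U) &&
                 [exists v, [&& (v, w) \in F, v \in U & nbrs_in e v U]]].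

Lemma roundsS (F : {set T * T}) (B : {set T}) (j : nat) :
  rounds e F B j.+1 = round_step F (rounds e F B j).
Proof. by []. Qed.

Lemma ready_mono (U V : {set T}) : U \subset V -> ready U \subset ready V.
Proof.
move=> UV; apply/subsetP => v; rewrite !inE => /andP[vU nbv].
by rewrite (subsetP UV _ vU) (nbrs_in_mono UV nbv).
Qed.

Lemma targets_mono (F : {set T * T}) (X Y : {set T}) :
  X \subset Y -> targets F X \subset targets F Y.
Proof.
move=> /subsetP XY; apply: imsetS; apply/subsetP => f; rewrite !inE.
by case/andP=> -> /XY.
Qed.

Lemma round_step_idle (F : {set T * T}) (U : {set T}) :
  ready U = set0 -> round_step F U = U.
Proof.
move=> R0; apply/setUidPl/subsetP => w; rewrite inE.
case/andP=> _ /existsP[v /and3P[_ vU nbv]].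
have : v \in ready U by rewrite inE vU nbv.
by rewrite R0 inE.
Qed.

Lemma card_targets (F : {set T * T}) (X : {set T}) :
  (forall v w w', (v, w) \in F -> (v, w') \in F -> w = w') ->
  #|targets F X| <= #|X|.
Proof.
move=> Ffun; set FX := [set f in F | f.1 \in X].
have fst_inj : {in FX &, injective fst}.
  move=> [v w] [v' w']; rewrite !inE /= => /andP[vwF _] /andP[vwF' _] vv'.
  by rewrite -vv' in vwF' *; rewrite (Ffun _ _ _ vwF vwF').
apply: leq_trans (leq_imset_card _ _) _; rewrite -(card_in_imset fst_inj).
by apply: subset_leq_card; apply/subsetP => v /imsetP[f]; rewrite inE => /andP[_ fX] ->.
Qed.

Lemma round_step_sub (F : {set T * T}) (U : {set T}) :
  round_step F U \subset U :|: targets F (ready U).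
Proof.
apply: setUS; apply/subsetP => w; rewrite inE => /andP[_ /existsP[v /and3P[vwF vU nbv]]].
by apply/imsetP; exists (v, w); rewrite // !inE vwF vU nbv.
Qed.

Lemma rounds_sub_targets (F : {set T * T}) (B : {set T}) (j : nat) :
  rounds e F B j.+1 \subset B :|: targets F (ready (rounds e F B j)).
Proof.
elim: j => [|j IH]; first exact: round_step_sub.
have grow : rounds e F B j \subset rounds e F B j.+1 by rewrite roundsS subsetUl.
rewrite roundsS; apply: subset_trans (round_step_sub _ _) _.
rewrite subUset subsetUr andbT; apply: subset_trans IH _.
exact/setUS/targets_mono/ready_mono.
Qed.

(* If some vertex is still white, the blue vertices that are not ready
   separate the ready vertices from the white ones; hence at least kappa
   blue vertices are not ready. *)
Lemma ready_card_bound (U : {set T}) :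
  U != setT -> ready U != set0 -> #|ready U| + vconn e <= #|U|.
Proof.
rewrite -subTset => /subsetPn [x _ xU] /set0Pn [u uR].
set R := ready U; set S := U :\: R.
have RU : R \subset U by apply/subsetP => v; rewrite inE => /andP[].
have R_closed a b : del_rel e S a b -> a \in R -> b \in R.
  rewrite /del_rel /= !in_setD !negb_and !negbK => /and3P[eab _] /orP[//|bU].
  by rewrite inE => /andP[_ /forallP /(_ b)]; rewrite eab (negbTE bU).
have sepS : separating e S.
  apply/orP; right; apply/existsP; exists u; apply/existsP; exists x.
  rewrite !in_setD !negb_and !negbK uR xU orbT /=; apply/negP => /connect_closed.
  by move=> /(_ R R_closed uR); rewrite inE (negbTE xU).
have := vconn_le sepS; rewrite cardsD (setIidPr RU).
by have := subset_leq_card RU; lia.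
Qed.

End HoppingForcing.

Section RoundGrowth.
Variables (T : finType) (e : rel T) (F : {set T * T}) (B : {set T}).
Hypothesis F_functional : forall v w w', (v, w) \in F -> (v, w') \in F -> w = w'.
Local Notation U := (rounds e F B).

Lemma rounds_mono (i j : nat) : i <= j -> U i \subset U j.
Proof.
elim: j => [|j IH]; first by rewrite leqn0 => /eqP->.
rewrite leq_eqVlt => /predU1P [->//|/IH sub].
by apply: subset_trans sub _; rewrite roundsS subsetUl.
Qed.

Lemma rounds_stall (j : nat) : U j.+1 = U j -> forall m, j <= m -> U m = U j.
Proof.
move=> stall; elim=> [|m IH]; first by rewrite leqn0 => /eqP->.
rewrite leq_eqVlt => /predU1P [<-//|/IH Um].
by rewrite roundsS Um -roundsS stall.
Qed.

Lemma round_growth (j : nat) :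
  U j != setT -> ready e (U j) != set0 -> #|U j.+1| + vconn e <= #|B| + #|U j|.
Proof.
move=> Uj Rj; have ready_bound := ready_card_bound Uj Rj.
have new_bound := card_targets (ready e (U j)) F_functional.
have sub := subset_leq_card (rounds_sub_targets e F B j).
have [union_bound _] := leq_card_setU B (targets F (ready e (U j))).
lia.
Qed.

(* If round i is the first to make everything blue, then every earlier round
   loses kappa against the |B| vertices it could at most colour, giving
   n + i * kappa <= (i + 1) * |B|. *)
Lemma rounds_lower_bound (i : nat) :
  U i = setT -> (forall j, j < i -> U j != setT) ->
  #|T| + i * vconn e <= i.+1 * #|B|.
Proof.
move=> Ui before.
suff inv j : j <= i -> #|U j| + j * vconn e <= j.+1 * #|B|.
  by have := inv i (leqnn i); rewrite Ui cardsT.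
elim: j => [|j IH] ji; first by rewrite mul0n addn0 mul1n.
have Uj := before j ji.
have Rj : ready e (U j) != set0.
  apply: contra_neq Uj => R0.
  by rewrite -Ui (rounds_stall _ (ltnW ji)) // roundsS round_step_idle.
have := round_growth Uj Rj; have := IH (ltnW ji); nia.
Qed.

End RoundGrowth.

Section LowerBound.
Variables (T : finType) (e : rel T).

Lemma chron_ok_fst_uniq (blue used : {set T}) (s : seq (T * T)) :
  chron_ok e blue used s -> uniq (map fst s) && all [predC used] (map fst s).
Proof.
elim: s blue used => [//|[v w] s IH] blue used /= /andP[/and4P[_ v_fresh _ _]].
move=> /IH /andP[us /allP later_fresh]; rewrite us v_fresh /= andbT.
apply/andP; split.
  by apply/negP => /later_fresh; rewrite !inE eqxx.
by apply/allP => x /later_fresh; rewrite !inE negb_or => /andP[].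
Qed.

Lemma chron_list_functional (B : {set T}) (s : seq (T * T)) :
  chron_list e B s ->
  forall v w w', (v, w) \in [set x in s] -> (v, w') \in [set x in s] -> w = w'.
Proof.
move=> /chron_ok_fst_uniq /andP[us _] v w w'; rewrite !inE.
exact: uniq_fst_functional.
Qed.

Lemma hopping_lower_bound (B : {set T}) (s : seq (T * T)) (t : nat) :
  chron_list e B s -> rounds e [set x in s] B t = setT ->
  exists2 i, i <= t & #|T| + i * vconn e <= i.+1 * #|B|.
Proof.
move=> chron Ut; have ex : exists i, rounds e [set x in s] B i == setT.
  by exists t; rewrite Ut.
case: (ex_minnP ex) => i /eqP Ui first_i; exists i; first by apply: first_i; rewrite Ut.
apply: (rounds_lower_bound (chron_list_functional chron) Ui) => j ji.
by apply: contraTN ji => /first_i; rewrite leqNgt.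
Qed.

End LowerBound.

(* Let I be an independent set listed as
   x_0, ..., x_(|I|-1).  Start with B = (V \ I) u {x_0, ..., x_(k-1)} and let
   x_i force x_(i+k): every vertex of I is ready as soon as V \ I is blue,
   so round r colours x_(k r), ..., x_(k (r+1) - 1). *)
Section ShiftStrategy.
Variables (T : finType) (e : rel T) (I : {set T}) (k : nat) (x0 : T).
Hypotheses (I_indep : independent e I) (k_gt0 : 0 < k).

Local Notation x i := (nth x0 (enum I) i).

Definition shift_forces (m d : nat) : seq (T * T) :=
  [seq (x i, x (i + k)) | i <- iota m d].

Definition shift_start : {set T} := ~: I :|: [set y in take k (enum I)].

Local Notation shift_rounds := (rounds e [set f in shift_forces 0 (#|I| - k)] shift_start).

Lemma x_in (i : nat) : i < #|I| -> x i \in I.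
Proof. by move=> iI; rewrite -mem_enum mem_nth // -cardE. Qed.

Lemma x_in_take (i m : nat) : i < #|I| -> (x i \in take m (enum I)) = (i < m).
Proof. by move=> iI; rewrite in_take ?mem_nth ?index_uniq ?enum_uniq // -cardE. Qed.

Lemma set_take_succ (m : nat) : m < #|I| ->
  [set y in take m.+1 (enum I)] = x m |: [set y in take m (enum I)].
Proof.
by move=> mI; apply/setP => y; rewrite (take_nth x0) -?cardE // !inE mem_rcons inE.
Qed.

(* Invariant: after the forces of x_0, ..., x_(m-1), the blue vertices are
   V \ I and x_0, ..., x_(m+k-1); the remaining forces are valid in order. *)
Lemma shift_chron_ok (d m : nat) : m + d = #|I| - k ->
  chron_ok e (~: I :|: [set y in take (m + k) (enum I)]) [set y in take m (enum I)]
    (shift_forces m d).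
Proof.
elim: d m => [|d IH] m md.
  rewrite take_oversize -?cardE; last by lia.
  by rewrite set_enum setUC setUCr; apply: chron_ok_all_blue.
apply/andP; split.
  rewrite /can_force !inE negb_or !x_in_take ?x_in //=; try lia.
  rewrite !ltnn (_ : m < m + k) ?orbT //=; last lia.
  by apply: indep_nbrs_in I_indep _ (subsetUl _ _); apply: x_in; lia.
rewrite setUCA -!set_take_succ -?addSn; try lia.
by apply: IH; lia.
Qed.

Lemma shift_chron : chron_list e shift_start (shift_forces 0 (#|I| - k)).
Proof.
have := shift_chron_ok (add0n _); rewrite add0n take0 /chron_list.
by rewrite (_ : [set y in [::]] = set0) //; apply/setP => y; rewrite !inE.
Qed.

Lemma shift_rounds_cover (r j : nat) :
  j < #|I| -> j < k * r.+1 -> x j \in shift_rounds r.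
Proof.
have coI r' : ~: I \subset shift_rounds r'.
  by apply: subset_trans (rounds_mono _ _ _ (leq0n r')); apply: subsetUl.
elim: r j => [|r IH] j jI jr.
  by rewrite /= in_setU in_set x_in_take ?orbT //; lia.
rewrite roundsS inE; case: (boolP (x j \in shift_rounds r)) => //= jU.
have kr : k * r.+1 <= j by rewrite leqNgt; apply: contra jU; apply: IH.
rewrite inE jU /=; apply/existsP; exists (x (j - k)).
rewrite IH ?(indep_nbrs_in I_indep (x_in _) (coI r)) ?andbT //; try lia.
rewrite inE; apply/mapP; exists (j - k); first by rewrite mem_iota; lia.
by rewrite subnK //; lia.
Qed.

Lemma card_shift_start : k <= #|I| -> #|shift_start| = #|~: I| + k.
Proof.
move=> kI; rewrite cardsU.
have -> : ~: I :&: [set y in take k (enum I)] = set0.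
  apply/setP => y; rewrite !inE; apply/negbTE/andP => -[yI /mem_take].
  by rewrite mem_enum (negbTE yI).
rewrite cards0 subn0; congr (_ + _).
by rewrite cardsE (card_uniqP _) ?take_uniq ?enum_uniq // size_takel -?cardE.
Qed.

Lemma shift_achieves (t : nat) :
  k <= #|I| -> #|I| <= k * t.+1 -> th_achieves e (#|~: I| + k + t).
Proof.
move=> kI It; exists shift_start, [set f in shift_forces 0 (#|I| - k)], t.
split; first by exists (shift_forces 0 (#|I| - k)); split => //; exact: shift_chron.
split; last by rewrite card_shift_start.
apply/setP => y; rewrite inE; case: (boolP (y \in I)) => yI; last first.
  by apply: (subsetP (rounds_mono _ _ _ (leq0n t))); rewrite !inE yI.
have yL : y \in enum I by rewrite mem_enum.
have yidx : index y (enum I) < #|I| by rewrite cardE index_mem.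
by rewrite -(nth_index x0 yL); apply: shift_rounds_cover => //; lia.
Qed.

End ShiftStrategy.

Lemma th_achievesbP (T : finType) (e : rel T) (k : nat) :
  reflect (th_achieves e k) (th_achievesb e k).
Proof. by rewrite /th_achievesb; case: excluded_middle_informative => h; constructor. Qed.

Lemma th_H_eq (T : finType) (e : rel T) (m : nat) :
  th_achieves e m -> (forall k, th_achieves e k -> m <= k) -> th_H e = m.
Proof.
move=> achm minm; rewrite /th_H; case: ex_minnP => k /th_achievesbP achk mink.
by apply/eqP; rewrite eqn_leq minm // andbT; apply/mink/th_achievesbP.
Qed.

Lemma amgm (x y : nat) : 4 * (x * y) <= (x + y) * (x + y).
Proof.
wlog xy : x y / x <= y => [hyp|].
  case: (leqP x y) => [xy|/ltnW yx]; first exact: hyp.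
  by rewrite [x * y]mulnC [x + y]addnC; apply: hyp.
by rewrite -(subnKC xy); set d := y - x; nia.
Qed.

Lemma square_cover (a : nat) : exists N, 4 * a <= N * N.
Proof. by exists a.+1; have := amgm a 1; rewrite muln1 addn1. Qed.

(* two_sqrt_ceil a is the least N with 4 a <= N^2, i.e. ceil (2 sqrt a). *)
Definition two_sqrt_ceil (a : nat) : nat := ex_minn (square_cover a).

Lemma two_sqrt_ceilP (a : nat) :
  4 * a <= two_sqrt_ceil a * two_sqrt_ceil a /\
  forall M, 4 * a <= M * M -> two_sqrt_ceil a <= M.
Proof. by rewrite /two_sqrt_ceil; case: ex_minnP. Qed.

Lemma square_half_split (a N : nat) : 4 * a <= N * N -> a <= N./2 * (N - N./2).
Proof.
move=> H; move: (odd_double_half N); set k := N./2; clearbody k.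
by case: (odd N) => /= E; rewrite -E -addnn in H *; nia.
Qed.

(* If a + c + i c <= (i + 1) b, then a <= (i + 1) (b - c), so that by AM-GM
   4 a <= (b - c + i + 1)^2. *)
Lemma square_from_rounds (a c b i : nat) :
  a + c + i * c <= i.+1 * b -> 4 * a <= (b - c + i.+1) * (b - c + i.+1).
Proof.
move=> H; have cb : c <= b by nia.
have ab : a <= i.+1 * (b - c) by rewrite mulnBr; lia.
by apply: leq_trans (amgm (b - c) i.+1); lia.
Qed.

(* Choosing k = floor (N / 2) and t = N - k - 1 with N = ceil (2 sqrt a)
   meets the covering condition a <= k (t + 1) of the shift strategy. *)
Lemma two_sqrt_ceil_split (a : nat) : 0 < a ->
  exists k t, [/\ 0 < k, k <= a, a <= k * t.+1 & k + t = (two_sqrt_ceil a).-1].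
Proof.
move=> a_gt0; have [cover least] := two_sqrt_ceilP a.
set N := two_sqrt_ceil a in cover least *.
have N_le : N <= a.+1 by apply: least; have := amgm a 1; rewrite muln1 addn1.
have N_ge2 : 2 <= N by nia.
have half_cover := square_half_split cover.
have halves := odd_double_half N; set k := N./2 in half_cover halves *.
rewrite -addnn in halves; exists k, (N - k - 1).
have tk : (N - k - 1).+1 = N - k by case: (odd N) halves => /=; lia.
by rewrite tk; case: (odd N) halves => /=; split; lia.
Qed.

Lemma achieves_lower_bound (T : finType) (e : rel T) (m : nat) :
  vconn e + indep_num e = #|T| -> th_achieves e m ->
  vconn e + (two_sqrt_ceil (indep_num e)).-1 <= m.
Proof.
move=> kappa_alpha [B [F [t [[s [chron ->]] [Ut ->]]]]].
have [i it bound] := hopping_lower_bound chron Ut.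
have fit : indep_num e + vconn e + i * vconn e <= i.+1 * #|B|.
  by rewrite -kappa_alpha in bound; lia.
have kappa_le : vconn e <= #|B| by nia.
by have := (two_sqrt_ceilP _).2 _ (square_from_rounds fit); lia.
Qed.

Lemma th_H_formula (T : finType) (e : rel T) :
  0 < #|T| -> vconn e + indep_num e = #|T| ->
  th_H e = vconn e + (two_sqrt_ceil (indep_num e)).-1.
Proof.
move=> n_gt0 kappa_alpha; have [x _] := card_gt0P n_gt0.
have alpha_gt0 : 0 < indep_num e by have := vconn_lt_card e n_gt0; lia.
have [I I_indep cardI] := indep_num_attained e.
have cardCI : #|~: I| = vconn e by have := cardsC I; lia.
apply: th_H_eq; last by move=> m; apply: achieves_lower_bound.
have [k [t [k_gt0 k_le cover <-]]] := two_sqrt_ceil_split alpha_gt0.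
rewrite -cardI in k_le cover.
by rewrite -cardCI addnA; apply: (shift_achieves x).
Qed.

Local Open Scope ring_scope.

Lemma ceil_two_sqrt (R : realType) (a c : nat) : (0 < a)%N ->
  Num.ceil (2 * Num.sqrt (a%:R : R) + c%:R - 1) = (c + (two_sqrt_ceil a).-1)%:Z.
Proof.
move=> a_gt0; have [cover least] := two_sqrt_ceilP a.
set N := two_sqrt_ceil a in cover least *.
have N_gt0 : (0 < N)%N by nia.
have below : ~~ (4 * a <= N.-1 * N.-1)%N by apply/negP => /least; lia.
apply: ceil_def; rewrite intrB (_ : (c + N.-1)%N%:~R = (c + N.-1)%:R :> R) // natrD.
set q := Num.sqrt (a%:R : R); set M := (N.-1)%:R : R.
have q_ge0 : 0 <= q := sqrtr_ge0 _.
have qq : q ^+ 2 = a%:R by rewrite sqr_sqrtr ?ler0n.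
have M_ge0 : 0 <= M by rewrite ler0n.
have upper : 4 * a%:R <= (M + 1) * (M + 1) :> R.
  by rewrite /M natr1 prednK // -!natrM ler_nat.
have lower : M * M < 4 * a%:R :> R by rewrite -!natrM ltr_nat ltnNge.
rewrite -qq in upper lower; apply/andP; split; nra.
Qed.

Theorem lemma3p11 (R : realType) (T : finType) (e : rel T) :
  simple_graph e -> (0 < #|T|)%N ->
  (vconn e + indep_num e)%N = #|T| ->
  ((th_H e)%:Z =
     Num.ceil (2 * Num.sqrt (#|T|%:R - (vconn e)%:R) + (vconn e)%:R - 1 : R))
  /\
  (Num.ceil (2 * Num.sqrt (#|T|%:R - (vconn e)%:R) + (vconn e)%:R - 1 : R) =
     Num.ceil (#|T|%:R - (indep_num e)%:R + 2 * Num.sqrt (indep_num e)%:R - 1 : R)).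
Proof.
move=> _ n_gt0 kappa_alpha.
have alpha_gt0 : (0 < indep_num e)%N by have := vconn_lt_card e n_gt0; lia.
have -> : #|T|%:R - (vconn e)%:R = (indep_num e)%:R :> R.
  by rewrite -kappa_alpha natrD addrC addKr.
have -> : #|T|%:R - (indep_num e)%:R = (vconn e)%:R :> R.
  by rewrite -kappa_alpha natrD addrK.
by rewrite th_H_formula // ceil_two_sqrt // [_%:R + 2 * _]addrC ceil_two_sqrt.
Qed.
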